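(* In the setup described in the context, assume the Levi-Civita connection $\nabla$ of $g$ is locally flat, i.e. $R=0$. Then $(M,\tilde g,Q)$ is an almost Einstein manifold, and $$\tilde\rho(x,y)=\frac{3\tilde\tau^*+\tilde\tau}{8}\,g(x,y)+\frac{3\tilde\tau+\tilde\tau^*}{8}\,\tilde g(x,y).$$
   Context: Let $M$ be a 3-dimensional smooth manifold. Fix a coordinate chart $(x^1,x^2,x^3)$ with coordinate vector fields $\partial_i$. Structures: - $g$ is a Riemannian metric with $g(\partial_1,\partial_1)=g(\partial_2,\partial_2)=A$, $g(\partial_3,\partial_3)=B$ and $g(\partial_i,\partial_j)=0$ for $i\ne j$. Here $A,B$ are smooth positive functions. - $Q$ is the $(1,1)$-tensor field with $Q\partial_1=\partial_2$, $Q\partial_2=-\partial_1$, $Q\partial_3=\partial_3$. - $P=Q^2$ and $\tilde g(x,y)=g(x,Py)$. Connections and curvature: - $\nabla$ and $\tilde\nabla$ are the Levi-Civita connections of $g$ and $\tilde g$, with curvature tensors $R$ and $\tilde R$ defined by $R(x,y)z=\nabla_x\nabla_yz-\nabla_y\nabla_xz-\nabla_{[x,y]}z$ (analogously for $\tilde R$). - $\tilde R(x,y,z,t)=\tilde g(\tilde R(x,y)z,t)$. Ricci tensor and scalar quantities: - $\tilde\rho(y,z)=\tilde g^{ij}\tilde R(e_i,y,z,e_j)$. - $\tilde\tau=\tilde g^{ij}\tilde\rho(e_i,e_j)$ and $\tilde\tau^*=g^{ij}\tilde\rho(e_i,e_j)$. Definition. $(M,\tilde g,Q)$ is almost Einstein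 if $\tilde\rho=\alpha g+\beta\tilde g$ for smooth functions $\alpha,\beta$. *)

(* local coordinate computation on an open set U of R^3. *)
From HB Require Import structures.
From mathcomp Require Import all_boot all_order all_algebra.
From mathcomp Require Import all_classical all_reals all_analysis.
Set Implicit Arguments. Unset Strict Implicit. Unset Printing Implicit Defensive.
Import Order.TTheory GRing.Theory Num.Theory.
Import numFieldNormedType.Exports.
Local Open Scope classical_set_scope.
Local Open Scope ring_scope.

Section Coord.
Variable R : realType.

Definition pt := 'rV[R]_3.

Definition ebase (i : 'I_3) : pt := delta_mx 0 i.

Definition pd (i : 'I_3) (f : pt -> R) : pt -> R := fun x => derive f x (ebase i).

Definition iterpd (l : seq 'I_3) (f : pt -> R) : pt -> R := foldr pd f l.

Definition smooth_on (U : set pt) (f : pt -> R) : Prop :=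
  forall (l : seq 'I_3) (x : pt), U x -> differentiable (iterpd l f) x.

Definition tensor2 := 'I_3 -> 'I_3 -> pt -> R.

Definition mat_at (g : tensor2) (x : pt) : 'M[R]_3 := \matrix_(i, j) g i j x.
Definition inv_at (g : tensor2) (x : pt) : 'M[R]_3 := invmx (mat_at g x).

Definition christoffel (g : tensor2) (k i j : 'I_3) (x : pt) : R :=
  2^-1 * \sum_(l < 3) inv_at g x k l *
     (pd i (g j l) x + pd j (g i l) x - pd l (g i j) x).

(* R^l_{ijk}: coefficient of d_l in R(d_i,d_j)d_k
   = nabla_i nabla_j d_k - nabla_j nabla_i d_k  (coordinate fields commute) *)
Definition riem (g : tensor2) (i j k l : 'I_3) (x : pt) : R :=
  pd i (christoffel g l j k) x - pd j (christoffel g l i k) x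
  + \sum_(m < 3) (christoffel g m j k x * christoffel g l i m x
                  - christoffel g m i k x * christoffel g l j m x).

Definition riem4 (g : tensor2) (i j k t : 'I_3) (x : pt) : R :=
  \sum_(l < 3) riem g i j k l x * g l t x.

Definition ricci (g : tensor2) (a b : 'I_3) (x : pt) : R :=
  \sum_(i < 3) \sum_(j < 3) inv_at g x i j * riem4 g i a b j x.

Definition trace_wrt (h T : tensor2) (x : pt) : R :=
  \sum_(i < 3) \sum_(j < 3) inv_at h x i j * T i j x.

Definition gmet (A B : pt -> R) : tensor2 := fun i j x =>
  if i == j then (if i == 2%:R :> 'I_3 then B x else A x) else 0.

(* the (1,1)-tensor Q as a matrix: column j holds the components of Q d_j *)
Definition Qmat : 'M[R]_3 := \matrix_(k, j)
  (if (j == 0) && (k == 1) then 1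
   else if (j == 1) && (k == 0) then -1
   else if (j == 2%:R) && (k == 2%:R) then 1 else 0 : R).

Definition Pmat : 'M[R]_3 := Qmat *m Qmat.

Definition assoc_metric (g : tensor2) : tensor2 := fun i j x =>
  \sum_(k < 3) g i k x * Pmat k j.

Definition almost_Einstein (U : set pt) (g : tensor2) : Prop :=
  exists alpha beta : pt -> R, smooth_on U alpha /\ smooth_on U beta /\
    forall x, U x -> forall a b : 'I_3,
      ricci (assoc_metric g) a b x
      = alpha x * g a b x + beta x * assoc_metric g a b x.

End Coord.

(* With P = Q^2 = diag(-1,-1,1), the metric gt(x,y) = g(x,Py) is diag(-A,-A,B): the
   same diagonal metric as g = diag(A,A,B) with its entries re-signed.  For a diagonal
   metric the Christoffel symbols are Gamma^k_ij = (d_i g_jk + d_j g_ik - d_k g_ij)/(2 g_kk),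
   so re-signing only multiplies each symbol by a sign (christoffel_twist).  Expanding the
   Ricci contraction of gt in these symbols, the sign changes cancel off the diagonal and
   contribute equally to the (1,1) and (2,2) entries, because g_11 = g_22 makes the
   symbols symmetric under exchanging x^1 and x^2.  Hence, when R = 0, the Ricci tensor
   of gt is diag(r,r,s), which lies in the span of g and gt; its coefficients are read
   off from the two traces tau* = 2r/A + s/B and tau = -2r/A + s/B, and they are smooth
   because everything is built from A, B, 1/A, 1/B and their derivatives. *)

From HB Require Import structures.
From mathcomp Require Import all_boot all_order all_algebra.
From mathcomp Require Import all_classical all_reals all_analysis.
From mathcomp Require Import ring.
Import Order.TTheory GRing.Theory Num.Theory.
Import numFieldNormedType.Exports.
Local Open Scope classical_set_scope.
Local Open Scope ring_scope.
Set Implicit Arguments.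
Unset Strict Implicit.
Unset Printing Implicit Defensive.

Section Smoothness.
Variable R : realType.
Local Notation P := (pt R).

(* No derivability hypothesis: when [f] is not derivable neither is [k f] (for
   [k != 0]), and both derivatives take the junk value [0]. *)
Lemma pdZ (i : 'I_3) (k : R) (f : P -> R) x : pd i (fun y => k * f y) x = k * pd i f x.
Proof.
rewrite /pd; move: (ebase R i) => v; rewrite -[fun y => _]/(k \*: f).
have [->|k0] := eqVneq k 0.
  have -> : 0 \*: f = cst 0 by apply/funext => y; rewrite /= ?scale0r ?mul0r.
  by rewrite derive_cst ?scale0r ?mul0r.
have [df|ndf] := pselect (derivable f x v); first exact: deriveZ.
have ndkf : ~ derivable (k \*: f) x v.
  have kkf : k^-1 \*: (k \*: f) = f.
    by apply/funext => y; rewrite /= [LHS]mulrA mulVf // mul1r.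
  by move=> /(derivableZ (k := k^-1)); rewrite kkf.
have D0 (h : P -> R) : ~ derivable h x v -> 'D_v h x = 0 := fun nh => dvgP nh.
by rewrite !D0 // mulr0.
Qed.

Lemma differentiable_near0 (e : P -> R) x :
  (\forall z \near x, e z = 0) -> differentiable e x.
Proof.
move=> e0; have ex0 : e x = 0 := nbhs_singleton e0.
have eo : e \o shift x = cst (e x) + \0 +o_ 0 id.
  apply/eqaddoP => eps eps0.
  have : \forall z \near (0 : P), e (z + x) = 0.
    move: e0; rewrite (near_shift 0) /=.
    by apply: filterS => z; rewrite /= subr0 addrC.
  apply: filterS => z /= ez.
  by rewrite !fctE /= ez ex0 addr0 subr0 normr0 mulr_ge0 // ltW.
have d0 : 'd e x = 0 :> (P -> R).
  by apply/diff_unique => //; exact: cst_continuous.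
by apply/diff_locallyP; rewrite d0; split => //; exact: cst_continuous.
Qed.

Lemma near_eq_differentiable (f h : P -> R) x :
  (\forall z \near x, f z = h z) -> differentiable f x -> differentiable h x.
Proof.
move=> fh df.
have -> : h = f + (h - f) by apply/funext => z; rewrite !fctE addrC subrK.
apply: differentiableD => //; apply: differentiable_near0.
by apply: filterS fh => z fz; rewrite !fctE fz subrr.
Qed.

Variable U : set P.
Hypothesis oU : open U.

Lemma near_U x : U x -> \forall z \near x, U z.
Proof. by move=> Ux; move: oU; rewrite openE => /(_ x Ux). Qed.

Lemma iterpd_eq_on (f h : P -> R) : (forall y, U y -> f y = h y) ->
  forall l y, U y -> iterpd l f y = iterpd l h y.
Proof.
move=> fh; elim=> [|i l IH] y Uy /=; first exact: fh.
rewrite /pd; apply: near_eq_derive; near=> z; apply: IH.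
by near: z; exact: near_U.
Unshelve. all: by end_near. Qed.

(* Bounding the order of the derivatives turns the product rule into an induction. *)
Definition smooth_upto n (f : P -> R) := forall l : seq 'I_3, (size l <= n)%N ->
  forall y, U y -> differentiable (iterpd l f) y.

Lemma smooth_onE f : smooth_on U f <-> forall n, smooth_upto n f.
Proof.
split=> [sf n l _ | sf l]; first exact: sf.
exact: (sf (size l) l (leqnn _)).
Qed.

Lemma smooth_upto_le m n f : (m <= n)%N -> smooth_upto n f -> smooth_upto m f.
Proof. by move=> mn sf l lm; apply: sf; apply: leq_trans mn. Qed.

Lemma smooth_upto_eq n f h :
  (forall y, U y -> f y = h y) -> smooth_upto n f -> smooth_upto n h.
Proof.
move=> fh sf l ln y Uy; apply: near_eq_differentiable (sf l ln y Uy).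
by near=> z; apply: iterpd_eq_on => //; near: z; exact: near_U.
Unshelve. all: by end_near. Qed.

Lemma iterpd_rcons l i (f : P -> R) : iterpd (rcons l i) f = iterpd l (pd i f).
Proof. by rewrite /iterpd foldr_rcons. Qed.

Lemma smooth_upto_pd n i f : smooth_upto n.+1 f -> smooth_upto n (pd i f).
Proof.
by move=> sf l ln y Uy; rewrite -iterpd_rcons; apply: sf; rewrite ?size_rcons.
Qed.

Lemma smooth_upto_cst n (c : R) : smooth_upto n (fun=> c).
Proof.
have iterpd_cst l : exists c', iterpd l (fun=> c) = fun=> c'.
  elim: l => [|i l [c' IH]] /=; first by exists c.
  by exists 0; rewrite IH; apply/funext => y; exact: derive_cst.
by move=> l _ y _; have [c' ->] := iterpd_cst l; exact: differentiable_cst.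
Qed.

Lemma smooth_uptoD n f h :
  smooth_upto n f -> smooth_upto n h -> smooth_upto n (fun y => f y + h y).
Proof.
move=> sf sh.
have iterpdD l : (size l <= n)%N -> forall y, U y ->
    iterpd l (fun y => f y + h y) y = iterpd l f y + iterpd l h y.
  elim: l => [|i l IH] ln y Uy //=.
  rewrite /pd (near_eq_derive (g := iterpd l f + iterpd l h)).
    by rewrite deriveD //; apply: diff_derivable; [apply: sf | apply: sh];
      rewrite // ltnW.
  by near=> z; rewrite IH ?(ltnW ln) //; near: z; exact: near_U.
move=> l ln y Uy; apply: (@near_eq_differentiable (iterpd l f + iterpd l h)).
  by near=> z; rewrite iterpdD //; near: z; exact: near_U.
by apply: differentiableD; [apply: sf | apply: sh].
Unshelve. all: by end_near. Qed.

Lemma smooth_uptoM n f h :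
  smooth_upto n f -> smooth_upto n h -> smooth_upto n (fun y => f y * h y).
Proof.
elim: n f h => [|n IH] f h sf sh l ln y Uy.
  by case: l ln => // _; apply: differentiableM; [apply: (sf [::]) | apply: (sh [::])].
case/lastP: l ln => [|l i] ln.
  by apply: differentiableM; [apply: (sf [::]) | apply: (sh [::])].
rewrite size_rcons ltnS in ln; rewrite iterpd_rcons.
suff : smooth_upto n (pd i (fun y => f y * h y)) by exact.
apply: (@smooth_upto_eq _ (fun y => pd i f y * h y + f y * pd i h y)).
  move=> z Uz; rewrite /pd -[fun y => _]/(f * h)%R deriveM.
  - by rewrite /= addrC; congr (_ + _); apply: mulrC.
  - by apply: diff_derivable; apply: (sf [::]).
  - by apply: diff_derivable; apply: (sh [::]).
apply: smooth_uptoD; apply: IH.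
- exact: smooth_upto_pd.
- exact: smooth_upto_le (leqnSn n) sh.
- exact: smooth_upto_le (leqnSn n) sf.
- exact: smooth_upto_pd.
Qed.

Lemma smooth_on_eq f h :
  (forall y, U y -> f y = h y) -> smooth_on U f -> smooth_on U h.
Proof. by move=> fh /smooth_onE sf; apply/smooth_onE => n; exact: smooth_upto_eq (sf n). Qed.

Lemma smooth_on_pd i f : smooth_on U f -> smooth_on U (pd i f).
Proof. by move=> /smooth_onE sf; apply/smooth_onE => n; apply: smooth_upto_pd. Qed.

Lemma smooth_on_cst c : smooth_on U (fun=> c).
Proof. by apply/smooth_onE => n; apply: smooth_upto_cst. Qed.

Lemma smooth_onD f h :
  smooth_on U f -> smooth_on U h -> smooth_on U (fun y => f y + h y).
Proof.
by move=> /smooth_onE sf /smooth_onE sh; apply/smooth_onE => n; apply: smooth_uptoD.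
Qed.

Lemma smooth_onM f h :
  smooth_on U f -> smooth_on U h -> smooth_on U (fun y => f y * h y).
Proof.
by move=> /smooth_onE sf /smooth_onE sh; apply/smooth_onE => n; apply: smooth_uptoM.
Qed.

Lemma smooth_onN f : smooth_on U f -> smooth_on U (fun y => - f y).
Proof.
move=> sf; apply: (@smooth_on_eq (fun y => -1 * f y)) => [y _|]; first exact: mulN1r.
exact: smooth_onM (smooth_on_cst _) sf.
Qed.

Lemma smooth_onB f h :
  smooth_on U f -> smooth_on U h -> smooth_on U (fun y => f y - h y).
Proof. by move=> sf sh; apply: smooth_onD (smooth_onN sh). Qed.

Lemma smooth_onV f : (forall y, U y -> f y != 0) ->
  smooth_on U f -> smooth_on U (fun y => (f y)^-1).
Proof.
move=> f0 /smooth_onE sf; apply/smooth_onE => n.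
elim: n => [|n IH] l ln y Uy.
  by case: l ln => // _; apply: differentiableV; [apply: (sf 0%N [::]) | apply: f0].
case/lastP: l ln => [|l i] ln.
  by apply: differentiableV; [apply: (sf 0%N [::]) | apply: f0].
rewrite size_rcons ltnS in ln; rewrite iterpd_rcons.
suff : smooth_upto n (pd i (fun y => (f y)^-1)) by exact.
apply: (@smooth_upto_eq _ (fun y => -1 * ((f y)^-1 * (f y)^-1) * pd i f y)).
  move=> z Uz; rewrite /pd deriveV ?f0 //.
    by rewrite /= expr2 invfM mulN1r.
  by apply: diff_derivable; apply: (sf 0%N [::]).
apply: smooth_uptoM; last exact: smooth_upto_pd.
by apply: smooth_uptoM; [apply: smooth_upto_cst | apply: smooth_uptoM].
Qed.

Lemma smooth_on_sum (I : Type) (r : seq I) (F : I -> P -> R) :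
  (forall i, smooth_on U (F i)) -> smooth_on U (fun y => \sum_(i <- r) F i y).
Proof.
move=> sF; elim: r => [|i r IH].
  by apply: (smooth_on_eq _ (smooth_on_cst 0)) => y _; rewrite big_nil.
by apply: (smooth_on_eq _ (smooth_onD (sF i) IH)) => y _; rewrite big_cons.
Qed.
End Smoothness.

Lemma invmx_diag_mx (F : fieldType) n (r : 'rV[F]_n) : (forall i, r 0 i != 0) ->
  invmx (diag_mx r) = diag_mx (\row_i (r 0 i)^-1).
Proof.
move=> r0; set N := diag_mx (\row_i _).
have Nr : N *m diag_mx r = 1%:M.
  apply/matrixP => i j; rewrite mul_diag_mx !mxE.
  by case: eqP => [->|_]; rewrite ?mulr1n ?mulVf ?mulr0n ?mulr0.
have [_ ru] := mulmx1_unit Nr.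
by rewrite -[invmx _]mul1mx -Nr -mulmxA mulmxV // mulmx1.
Qed.

(* Indices built from constructors, so that distinct ones are told apart cheaply. *)
Notation i0 := (@Ordinal 3 0 isT).
Notation i1 := (@Ordinal 3 1 isT).
Notation i2 := (@Ordinal 3 2 isT).

Lemma sum3 (R : realType) (F : 'I_3 -> R) : \sum_(m < 3) F m = F i0 + F i1 + F i2.
Proof.
by rewrite !big_ord_recl big_ord0 addr0 addrA; congr (F _ + F _ + F _); apply: val_inj.
Qed.

Lemma ord3P (a : 'I_3) : [\/ a = i0, a = i1 | a = i2].
Proof.
by case: a => [[|[|[|k]]] ak]; [apply: Or31|apply: Or32|apply: Or33|]; try apply: val_inj.
Qed.

Section RiemannianBasics.
Variable R : realType.
Local Notation P := (pt R).

(* For a symmetric [g], contracting [g^{ij}] against [g_{lj}] leaves [R^i_{iab}]. *)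
Lemma ricci_contract (g : tensor2 R) (x : P) a b :
  (forall i j, g i j x = g j i x) -> mat_at g x \in unitmx ->
  ricci g a b x = \sum_(i < 3) riem g i a b i x.
Proof.
move=> gsym gu; apply: eq_bigr => i _; rewrite /riem4.
have -> : \sum_(j < 3) inv_at g x i j * \sum_(l < 3) riem g i a b l x * g l j x
        = \sum_(l < 3) riem g i a b l x * (inv_at g x *m mat_at g x) i l.
  rewrite (eq_bigr _ (fun j _ => big_distrr _ _ _)) exchange_big /=.
  apply: eq_bigr => l _; rewrite mxE big_distrr /=; apply: eq_bigr => j _.
  by rewrite mxE gsym mulrCA.
rewrite mulVmx // (bigD1 i) //= mxE eqxx mulr1 big1 ?addr0 // => l li.
by rewrite mxE eq_sym (negbTE li) mulr0.
Qed.

Lemma riem_sum3 (g : tensor2 R) i j k l x : riem g i j k l x =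
  pd i (christoffel g l j k) x - pd j (christoffel g l i k) x
  + (christoffel g i0 j k x * christoffel g l i i0 x
     - christoffel g i0 i k x * christoffel g l j i0 x)
  + (christoffel g i1 j k x * christoffel g l i i1 x
     - christoffel g i1 i k x * christoffel g l j i1 x)
  + (christoffel g i2 j k x * christoffel g l i i2 x
     - christoffel g i2 i k x * christoffel g l j i2 x).
Proof. by rewrite /riem sum3 !addrA. Qed.

Lemma smooth_on_riem (U : set P) (g : tensor2 R) i j k l : open U ->
  (forall k i j, smooth_on U (christoffel g k i j)) -> smooth_on U (riem g i j k l).
Proof.
move=> oU sG; rewrite /riem; apply: smooth_onD => //.
  by apply: smooth_onB => //; apply: smooth_on_pd.
by apply: smooth_on_sum => // m; apply: smooth_onB => //; apply: smooth_onM.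
Qed.

End RiemannianBasics.

Section DiagonalMetric.
Variables (R : realType) (d : 'I_3 -> pt R -> R).
Local Notation P := (pt R).

Definition diag_metric : tensor2 R := fun i j x => if i == j then d i x else 0.

Lemma diag_metric_sym i j x : diag_metric i j x = diag_metric j i x.
Proof. by rewrite /diag_metric eq_sym; case: eqP => // ->. Qed.

Lemma pd_diag_metric k i j x :
  pd k (diag_metric i j) x = if i == j then pd k (d i) x else 0.
Proof. by rewrite /pd /diag_metric; case: eqP => _ //; exact: derive_cst. Qed.

Section AtPoint.
Variable x : P.
Hypothesis d0 : forall i, d i x != 0.

Lemma mat_at_diag_metric : mat_at diag_metric x = diag_mx (\row_i d i x).
Proof.
apply/matrixP => i j; rewrite !mxE /diag_metric.
by case: eqP => [->|]; rewrite ?mulr1n ?mulr0n.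
Qed.

Lemma unitmx_diag_metric : mat_at diag_metric x \in unitmx.
Proof.
by rewrite unitmxE mat_at_diag_metric det_diag unitfE; apply/prodf_neq0 => i _; rewrite mxE.
Qed.

Lemma inv_at_diag_metric : inv_at diag_metric x = diag_mx (\row_i (d i x)^-1).
Proof.
rewrite /inv_at mat_at_diag_metric invmx_diag_mx => [|i]; last by rewrite mxE.
by congr diag_mx; apply/rowP => i; rewrite !mxE.
Qed.

Lemma christoffel_diag_metric k i j : christoffel diag_metric k i j x =
  2^-1 * ((d k x)^-1 * (pd i (diag_metric j k) x + pd j (diag_metric i k) x
                        - pd k (diag_metric i j) x)).
Proof.
rewrite /christoffel inv_at_diag_metric (bigD1 k) //= !mxE eqxx mulr1n.
by rewrite big1 ?addr0 // => l lk; rewrite !mxE eq_sym (negbTE lk) mulr0n mul0r.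
Qed.

Lemma christoffel_diag_metric_distinct k i j :
  k != i -> k != j -> i != j -> christoffel diag_metric k i j x = 0.
Proof.
move=> ki kj ij; rewrite christoffel_diag_metric !pd_diag_metric.
by rewrite (negbTE ij) !ifN_eqC // !addr0 subr0 !mulr0.
Qed.

Lemma trace_wrt_diag_metric T : trace_wrt diag_metric T x = \sum_(i < 3) T i i x / d i x.
Proof.
rewrite /trace_wrt inv_at_diag_metric; apply: eq_bigr => i _.
rewrite (bigD1 i) //= !mxE eqxx mulr1n big1 ?addr0; first exact: mulrC.
by move=> j ji; rewrite !mxE eq_sym (negbTE ji) mulr0n mul0r.
Qed.

End AtPoint.
End DiagonalMetric.

Lemma smooth_on_trace_wrt_diag_metric (R : realType) (U : set (pt R))
    (d : 'I_3 -> pt R -> R) (T : tensor2 R) : open U ->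
  (forall i y, U y -> d i y != 0) -> (forall i, smooth_on U (d i)) ->
  (forall i, smooth_on U (T i i)) -> smooth_on U (trace_wrt (diag_metric d) T).
Proof.
move=> oU d0 sd sT; apply: (smooth_on_eq oU (f := fun y => \sum_(i < 3) T i i y / d i y)).
  by move=> y Uy; rewrite trace_wrt_diag_metric // => i; exact: d0.
apply: (smooth_on_sum oU) => i.
exact: (smooth_onM oU (sT i) (smooth_onV oU (d0 i) (sd i))).
Qed.

Section SignTwist.
Variables (R : realType) (U : set (pt R)) (d : 'I_3 -> pt R -> R) (s : 'I_3 -> R).
Hypothesis oU : open U.
Hypothesis d0 : forall i y, U y -> d i y != 0.
Hypothesis sP : forall i, s i = 1 \/ s i = -1.

Local Notation g := (diag_metric d).
Local Notation gs := (diag_metric (fun j y => s j * d j y)).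

Definition christoffel_sign (k i j : 'I_3) : R := if i == j then s k * s j else 1.

Lemma twist_neq0 i y : U y -> s i * d i y != 0.
Proof.
by move=> Uy; rewrite mulf_neq0 ?d0 //; case: (sP i) => ->; rewrite ?oppr_eq0 oner_eq0.
Qed.

Lemma pd_twist m i j y : pd m (gs i j) y = s j * pd m (g i j) y.
Proof.
rewrite -pdZ; congr (pd m _ y); apply/funext => z.
by rewrite /diag_metric; case: eqP => [->|_]; rewrite ?mulr0.
Qed.

Lemma christoffel_twist k i j y : U y ->
  christoffel gs k i j y = christoffel_sign k i j * christoffel g k i j y.
Proof.
move=> Uy; have d0y l : d l y != 0 := d0 l Uy.
have t0y l : s l * d l y != 0 := twist_neq0 l Uy.
rewrite (@christoffel_diag_metric _ (fun j z => s j * d j z) y t0y).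
rewrite (christoffel_diag_metric d0y) !pd_twist invfM /christoffel_sign !pd_diag_metric.
case: (eqVneq i j) => [<-|ij]; last first.
  by rewrite !mulr0; case: (sP k) => ->; rewrite ?invr1 ?invrN1; ring.
case: (eqVneq i k) => [<-|ik].
  by case: (sP i) => ->; rewrite ?invr1 ?invrN1; ring.
by case: (sP i) => ->; case: (sP k) => ->; rewrite ?invr1 ?invrN1; ring.
Qed.

Lemma pd_christoffel_twist m k i j y : U y ->
  pd m (christoffel gs k i j) y = christoffel_sign k i j * pd m (christoffel g k i j) y.
Proof.
move=> Uy; rewrite -pdZ /pd; apply: near_eq_derive; near=> z.
by rewrite christoffel_twist //; near: z; exact: near_U.
Unshelve. all: by end_near. Qed.

Hypothesis sd : forall i, smooth_on U (d i).

Lemma smooth_on_christoffel_diag_metric k i j : smooth_on U (christoffel g k i j).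
Proof.
have sg a b : smooth_on U (g a b).
  by rewrite /diag_metric; case: eqP => _; [exact: sd | exact: smooth_on_cst].
apply: (smooth_on_eq oU (f := fun y =>
  2^-1 * ((d k y)^-1 * (pd i (g j k) y + pd j (g i k) y - pd k (g i j) y)))).
  by move=> y Uy; rewrite christoffel_diag_metric // => l; exact: d0.
apply: (smooth_onM oU (smooth_on_cst _)).
apply: (smooth_onM oU (smooth_onV oU (d0 k) (sd k))).
by apply: (smooth_onB oU (smooth_onD oU _ _)); apply: smooth_on_pd.
Qed.

Lemma smooth_on_christoffel_twist k i j : smooth_on U (christoffel gs k i j).
Proof.
apply: (smooth_on_eq oU (f := fun y => christoffel_sign k i j * christoffel g k i j y)).
  by move=> y Uy; rewrite christoffel_twist.
exact: (smooth_onM oU (smooth_on_cst _) (smooth_on_christoffel_diag_metric _ _ _)).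
Qed.

End SignTwist.

Section AssociatedMetric.
Variables (R : realType) (A B : pt R -> R).
Local Notation P := (pt R).

Definition gmet_diag (j : 'I_3) (y : P) : R := if j == 2%:R then B y else A y.

(* eigenvalues of [P = Q^2 = diag(-1,-1,1)] *)
Definition psign (j : 'I_3) : R := if j == 2%:R then 1 else -1.

Local Notation g := (diag_metric gmet_diag).
Local Notation gt := (diag_metric (fun j y => psign j * gmet_diag j y)).

Lemma psignP j : psign j = 1 \/ psign j = -1.
Proof. by rewrite /psign; case: ifP; [left | right]. Qed.

Lemma Pmat_diag : Pmat R = diag_mx (\row_j psign j).
Proof.
apply/matrixP => k j; rewrite /Pmat /psign !mxE sum3 !mxE.
by case: (ord3P k) => [||] ->; case: (ord3P j) => [||] ->;
  rewrite /= ?mul0r ?mulr0 ?add0r ?addr0 ?mulN1r ?mulr1 ?mulrN1 ?opprK.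
Qed.

Lemma gmet_diag_metric : gmet A B = g.
Proof. by []. Qed.

Lemma assoc_metric_gmet : assoc_metric (gmet A B) = gt.
Proof.
apply/funext => i; apply/funext => j; apply/funext => y.
rewrite /assoc_metric Pmat_diag (bigD1 j) //= big1 => [|k kj].
  rewrite !mxE eqxx mulr1n addr0 gmet_diag_metric /diag_metric mulrC.
  by case: eqP => [->|]; rewrite ?mulr0.
by rewrite !mxE (negbTE kj) mulr0n mulr0.
Qed.

Variable U : set P.
Hypothesis oU : open U.
Hypothesis A0 : forall y, U y -> A y != 0.
Hypothesis B0 : forall y, U y -> B y != 0.

Lemma gmet_diag_neq0 j y : U y -> gmet_diag j y != 0.
Proof. by move=> Uy; rewrite /gmet_diag; case: ifP => _; [exact: B0 | exact: A0]. Qed.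

Lemma christoffel_gmet_swap01 y : U y ->
  [/\ christoffel g i2 i1 i1 y = christoffel g i2 i0 i0 y,
      christoffel g i1 i1 i2 y = christoffel g i0 i0 i2 y &
      christoffel g i1 i2 i1 y = christoffel g i0 i2 i0 y].
Proof.
move=> Uy; have gd0 i : gmet_diag i y != 0 := gmet_diag_neq0 i Uy.
by rewrite !(christoffel_diag_metric gd0) !pd_diag_metric /=.
Qed.
Lemma pd_christoffel_gmet_swap01 y : U y ->
  pd i2 (christoffel g i2 i1 i1) y = pd i2 (christoffel g i2 i0 i0) y.
Proof.
move=> Uy; apply: near_eq_derive; near=> z.
have [] // := @christoffel_gmet_swap01 z; by near: z; exact: near_U.
Unshelve. all: by end_near. Qed.

Lemma ricci_twist_offdiag a b y : U y -> a != b ->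
  \sum_(i < 3) riem gt i a b i y = \sum_(i < 3) riem g i a b i y.
Proof.
move=> Uy ab; have gd0 := gmet_diag_neq0.
have G0 := christoffel_diag_metric_distinct (fun j => gd0 j y Uy).
have Gt k i j := christoffel_twist gd0 psignP k i j Uy.
have dGt m k i j := pd_christoffel_twist oU gd0 psignP m k i j Uy.
rewrite !sum3 !riem_sum3.
(* Abstracting the symbols makes the remaining rewrites purely syntactic. *)
move: Gt dGt G0; move: (christoffel gt) (christoffel g) (@pd R) => ct c p Gt dGt G0.
rewrite !Gt !dGt /christoffel_sign /psign.
case: (ord3P a) ab => [||] ->; case: (ord3P b) => [||] -> // _ /=;
  rewrite ?(G0 i0 i1 i2) ?(G0 i0 i2 i1) ?(G0 i1 i0 i2) ?(G0 i1 i2 i0) ?(G0 i2 i0 i1)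
    ?(G0 i2 i1 i0) //; ring.
Qed.

Lemma ricci_twist_diag y : U y ->
  \sum_(i < 3) riem gt i i1 i1 i y = \sum_(i < 3) riem gt i i0 i0 i y
    + (\sum_(i < 3) riem g i i1 i1 i y - \sum_(i < 3) riem g i i0 i0 i y).
Proof.
move=> Uy; have gd0 := gmet_diag_neq0.
have G0 := christoffel_diag_metric_distinct (fun j => gd0 j y Uy).
have Gt k i j := christoffel_twist gd0 psignP k i j Uy.
have dGt m k i j := pd_christoffel_twist oU gd0 psignP m k i j Uy.
have [G211 G112 G121] := christoffel_gmet_swap01 Uy.
have dG211 := pd_christoffel_gmet_swap01 Uy.
rewrite !sum3 !riem_sum3.
move: Gt dGt G0 G211 G112 G121 dG211.
move: (christoffel gt) (christoffel g) (@pd R) => ct c p Gt dGt G0 G211 G112 G121 dG211.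
rewrite !Gt !dGt /christoffel_sign /psign /=.
rewrite (G0 i0 i1 i2) ?(G0 i0 i2 i1) ?(G0 i1 i0 i2) ?(G0 i1 i2 i0) ?(G0 i2 i0 i1)
  ?(G0 i2 i1 i0) //.
by rewrite dG211 G211 G112 G121; ring.
Qed.

Lemma ricci_assoc_metric a b y : U y ->
  ricci (assoc_metric (gmet A B)) a b y = \sum_(i < 3) riem gt i a b i y.
Proof.
move=> Uy; rewrite assoc_metric_gmet.
apply: ricci_contract => [i j|]; first exact: diag_metric_sym.
by apply: unitmx_diag_metric => j; apply: (twist_neq0 gmet_diag_neq0 psignP j Uy).
Qed.

Lemma gmet_trace_decomposition (T : tensor2 R) y : U y ->
  (forall a b, a != b -> T a b y = 0) -> T i1 i1 y = T i0 i0 y ->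
  forall a b, T a b y =
    (3 * trace_wrt (gmet A B) T y + trace_wrt (assoc_metric (gmet A B)) T y) / 8
      * gmet A B a b y
    + (3 * trace_wrt (assoc_metric (gmet A B)) T y + trace_wrt (gmet A B) T y) / 8
      * assoc_metric (gmet A B) a b y.
Proof.
move=> Uy Toff T11 a b; have gd0 j := gmet_diag_neq0 j Uy.
have gt0 j := twist_neq0 gmet_diag_neq0 psignP j Uy.
rewrite assoc_metric_gmet.
rewrite (@trace_wrt_diag_metric _ (fun j z => psign j * gmet_diag j z) y gt0).
rewrite (trace_wrt_diag_metric gd0) !sum3.
have [a0 b0] := (A0 Uy, B0 Uy).
case: (ord3P a) => [||] ->; case: (ord3P b) => [||] ->;
  rewrite ?(Toff i0 i1) ?(Toff i0 i2) ?(Toff i1 i0) ?(Toff i1 i2) ?(Toff i2 i0)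
    ?(Toff i2 i1) //;
  rewrite T11 /gmet /diag_metric /psign /gmet_diag /= ?mulN1r ?mul1r; field;
  by rewrite a0 b0.
Qed.

Section Flat.
Hypothesis flat : forall y, U y -> forall i j k l, riem (gmet A B) i j k l y = 0.

Lemma ricci_contraction_flat a b y : U y -> \sum_(i < 3) riem g i a b i y = 0.
Proof. by move=> Uy; rewrite big1 // => i _; exact: flat. Qed.

Lemma ricci_assoc_metric_offdiag a b y : U y -> a != b ->
  ricci (assoc_metric (gmet A B)) a b y = 0.
Proof.
by move=> Uy ab; rewrite ricci_assoc_metric // ricci_twist_offdiag // ricci_contraction_flat.
Qed.

Lemma ricci_assoc_metric11 y : U y ->
  ricci (assoc_metric (gmet A B)) i1 i1 y = ricci (assoc_metric (gmet A B)) i0 i0 y.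
Proof.
move=> Uy; rewrite !ricci_assoc_metric //; apply: eq_trans (ricci_twist_diag Uy) _.
by rewrite -[RHS]addr0; congr (_ + _); rewrite !ricci_contraction_flat // subrr.
Qed.

End Flat.

Hypothesis sA : smooth_on U A.
Hypothesis sB : smooth_on U B.

Lemma smooth_on_gmet_diag j : smooth_on U (gmet_diag j).
Proof. by rewrite /gmet_diag; case: (j == 2%:R). Qed.

Lemma smooth_on_ricci_assoc_metric a b : smooth_on U (ricci (assoc_metric (gmet A B)) a b).
Proof.
apply: (smooth_on_eq oU (f := fun y => \sum_(i < 3) riem gt i a b i y)).
  by move=> y Uy; rewrite ricci_assoc_metric.
apply: (smooth_on_sum oU) => i; apply: (smooth_on_riem _ _ _ _ oU) => k l m.
exact: (smooth_on_christoffel_twist oU gmet_diag_neq0 psignP smooth_on_gmet_diag).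
Qed.

Lemma smooth_on_traces_ricci_assoc_metric :
  smooth_on U (trace_wrt (gmet A B) (ricci (assoc_metric (gmet A B)))) /\
  smooth_on U (trace_wrt (assoc_metric (gmet A B)) (ricci (assoc_metric (gmet A B)))).
Proof.
split; last rewrite {1}assoc_metric_gmet; apply: smooth_on_trace_wrt_diag_metric => //.
- exact: gmet_diag_neq0.
- exact: smooth_on_gmet_diag.
- by move=> i; exact: smooth_on_ricci_assoc_metric.
- by move=> i y Uy; exact: (twist_neq0 gmet_diag_neq0 psignP i Uy).
- by move=> i; apply: (smooth_onM oU (smooth_on_cst _)); exact: smooth_on_gmet_diag.
- by move=> i; exact: smooth_on_ricci_assoc_metric.
Qed.

End AssociatedMetric.

Theorem proposition4p5 (R : realType) (U : set (pt R)) (A B : pt R -> R) :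
  open U ->
  smooth_on U A -> smooth_on U B ->
  (forall x, U x -> 0 < A x) -> (forall x, U x -> 0 < B x) ->
  (forall x, U x -> forall i j k l : 'I_3, riem (gmet A B) i j k l x = 0) ->
  almost_Einstein U (gmet A B) /\
  (forall x, U x -> forall a b : 'I_3,
     ricci (assoc_metric (gmet A B)) a b x
     = (3 * trace_wrt (gmet A B) (ricci (assoc_metric (gmet A B))) x
          + trace_wrt (assoc_metric (gmet A B)) (ricci (assoc_metric (gmet A B))) x) / 8
         * gmet A B a b x
       + (3 * trace_wrt (assoc_metric (gmet A B)) (ricci (assoc_metric (gmet A B))) x
          + trace_wrt (gmet A B) (ricci (assoc_metric (gmet A B))) x) / 8
         * assoc_metric (gmet A B) a b x).
Proof.
move=> oU sA sB Apos Bpos flat.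
have A0 y (Uy : U y) : A y != 0 := lt0r_neq0 (Apos y Uy).
have B0 y (Uy : U y) : B y != 0 := lt0r_neq0 (Bpos y Uy).
have rho_eq x (Ux : U x) := gmet_trace_decomposition A0 B0 Ux
  (fun a b => ricci_assoc_metric_offdiag oU A0 B0 flat Ux)
  (ricci_assoc_metric11 oU A0 B0 flat Ux).
split=> //.
have [s_tr s_tr_assoc] := smooth_on_traces_ricci_assoc_metric oU A0 B0 sA sB.
have s_comb f h : smooth_on U f -> smooth_on U h ->
    smooth_on U (fun x => (3 * f x + h x) / 8).
  move=> sf sh; apply: (smooth_onM oU _ (smooth_on_cst _)).
  exact: (smooth_onD oU (smooth_onM oU (smooth_on_cst _) sf) sh).
eexists; eexists; split; first exact: (s_comb _ _ s_tr s_tr_assoc).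
by split; [exact: (s_comb _ _ s_tr_assoc s_tr) | exact: rho_eq].
Qed.
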